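(* Let $E$ be a closed subset of $\mathbb{R}^n$ and let $k \ge 1$ be such that every two points $x, y \in E$ can be connected by a rectifiable path contained in $E$ whose length is at most $k\,|x-y|$. Let $A$ be a continuous function on $E$ whose values $A(x)$ are linear mappings from $\mathbb{R}^n$ to $\mathbb{R}$, and let $f : E \to \mathbb{R}$ be locally Lipschitz. Suppose that for every interval $I \subseteq \mathbb{R}$ and every locally Lipschitz map $p : I \to E$, the derivative of $t \mapsto f(p(t))$ equals $A(p(t))(p'(t))$ for almost every $t \in I$. Then for every $x, y \in E$, $$|f(y) - f(x) - A(x)(y-x)| \le k\,|x-y|\,\sup\{\,|A(w) - A(x)| : w \in E,\ |x-w| \le k\,|x-y|\,\}.$$
   Context: $|\cdot|$ denotes the Euclidean norm on $\mathbb{R}^n$; for linear maps $B : \mathbb{R}^n \to \mathbb{R}$, $|B|$ denotes the operator norm (equivalently, the Euclidean norm of the vector representing $B$ via the standard inner product). *)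

From HB Require Import structures.
From mathcomp Require Import all_boot all_order all_algebra.
From mathcomp Require Import all_classical all_reals all_analysis.
Set Implicit Arguments. Unset Strict Implicit. Unset Printing Implicit Defensive.
Import Order.TTheory GRing.Theory Num.Theory.
Import numFieldNormedType.Exports.
Local Open Scope classical_set_scope.
Local Open Scope ring_scope.

Section Defs.
Variables (R : realType) (n : nat).

Definition enorm (v : 'rV[R]_n) : R := Num.sqrt (\sum_(i < n) v 0 i ^+ 2).

(* standard inner product; a linear map R^n -> R is represented by the
   vector B with B(v) = dotv B v, and its operator norm is enorm B *)
Definition dotv (u v : 'rV[R]_n) : R := \sum_(i < n) u 0 i * v 0 i.

Fixpoint poly_len (g : R -> 'rV[R]_n) (a : R) (s : seq R) : R :=
  match s with
  | [::] => 0
  | t :: s' => enorm (g t - g a) + poly_len g t s'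
  end.

Definition path_length (g : R -> 'rV[R]_n) (a b : R) : \bar R :=
  ereal_sup [set (poly_len g a s)%:E | s in [set s | itv_partition a b s]].

Definition cont_on_itv (g : R -> 'rV[R]_n) (a b : R) : Prop :=
  forall t, a <= t <= b -> forall eps : R, 0 < eps ->
    exists2 d : R, 0 < d & forall s, a <= s <= b -> `|s - t| < d ->
      enorm (g s - g t) < eps.

Definition joined_by_path (E : set 'rV[R]_n) (x y : 'rV[R]_n) (L : R) : Prop :=
  exists a b : R, exists g : R -> 'rV[R]_n,
    [/\ a <= b, g a = x, g b = y /\
        (forall t, a <= t <= b -> E (g t)),
        cont_on_itv g a b &
        (path_length g a b <= L%:E)%E].

Definition cont_on (E : set 'rV[R]_n) (A : 'rV[R]_n -> 'rV[R]_n) : Prop :=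
  forall x, E x -> forall eps : R, 0 < eps ->
    exists2 d : R, 0 < d & forall w, E w -> enorm (w - x) < d ->
      enorm (A w - A x) < eps.

Definition loc_lipschitz_on (E : set 'rV[R]_n) (f : 'rV[R]_n -> R) : Prop :=
  forall x, E x -> exists2 d : R, 0 < d & exists L : R,
    forall u v, E u -> E v -> enorm (u - x) < d -> enorm (v - x) < d ->
      `|f u - f v| <= L * enorm (u - v).

Definition loc_lipschitz_path (I : set R) (p : R -> 'rV[R]_n) : Prop :=
  forall t, I t -> exists2 d : R, 0 < d & exists L : R,
    forall s u, I s -> I u -> `|s - t| < d -> `|u - t| < d ->
      enorm (p s - p u) <= L * `|s - u|.

End Defs.

From HB Require Import structures.
From mathcomp Require Import all_boot all_order all_algebra.
From mathcomp Require Import all_classical all_reals all_analysis.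
From mathcomp Require Import ring lra.
Import Order.TTheory GRing.Theory Num.Theory.
Import numFieldNormedType.Exports.
Local Open Scope classical_set_scope.
Local Open Scope ring_scope.

(* Reparametrize a path of length at most [k |x - y|] from [x] to [y] in [E] by
   arc length: this gives a 1-Lipschitz [p : [0, l] -> E] with [l <= k |x - y|],
   which stays in the ball where the supremum [M] is taken. The function
   [phi t = f (p t) - A(x)(p t)] is then Lipschitz, and at almost every [t] its
   right difference quotients are at most [M + o(1)], because [p] has speed at
   most [1] and [|A (p t) - A x| <= M]. A mean value inequality for Lipschitz
   functions whose right derivatives are bounded outside a Lebesgue-null set
   (proved by real induction, absorbing the null set into the measure of a small
   open cover) yields [|phi l - phi 0| <= M l], which is the claim. *)

Set Implicit Arguments. Unset Strict Implicit.

Section EuclideanNorm.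
Variables (R : realType) (n : nat).
Implicit Types u v w : 'rV[R]_n.

Lemma sum_sqr_ge0 v : 0 <= \sum_(i < n) v 0 i ^+ 2.
Proof. by apply: sumr_ge0 => i _; exact: sqr_ge0. Qed.

Lemma enorm_ge0 v : 0 <= enorm v.
Proof. exact: sqrtr_ge0. Qed.

Lemma enorm_sqr v : enorm v ^+ 2 = \sum_(i < n) v 0 i ^+ 2.
Proof. by rewrite /enorm sqr_sqrtr // sum_sqr_ge0. Qed.

Lemma enorm0 : enorm (0 : 'rV[R]_n) = 0.
Proof. by rewrite /enorm big1 ?sqrtr0 // => i _; rewrite mxE expr0n. Qed.

Lemma enormN v : enorm (- v) = enorm v.
Proof. by rewrite /enorm; congr Num.sqrt; apply: eq_bigr => i _; rewrite mxE sqrrN. Qed.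

Lemma enorm_distC u v : enorm (u - v) = enorm (v - u).
Proof. by rewrite -enormN opprB. Qed.

Lemma enormZ (c : R) v : enorm (c *: v) = `|c| * enorm v.
Proof.
rewrite /enorm -sqrtr_sqr -sqrtrM ?sqr_ge0 //; congr Num.sqrt.
by rewrite mulr_sumr; apply: eq_bigr => i _; rewrite mxE exprMn.
Qed.

Lemma dotvC u v : dotv u v = dotv v u.
Proof. by apply: eq_bigr => i _; rewrite mulrC. Qed.

Lemma dotvBr u v w : dotv u (v - w) = dotv u v - dotv u w.
Proof. by rewrite /dotv -sumrB; apply: eq_bigr => i _; rewrite !mxE; ring. Qed.

Lemma dotvBl u v w : dotv (u - w) v = dotv u v - dotv w v.
Proof. by rewrite dotvC dotvBr ![dotv v _]dotvC. Qed.

Lemma dotvZr u (c : R) v : dotv u (c *: v) = c * dotv u v.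
Proof. by rewrite /dotv mulr_sumr; apply: eq_bigr => i _; rewrite !mxE; ring. Qed.

Lemma dotv_sqr_le u v : dotv u v ^+ 2 <= enorm u ^+ 2 * enorm v ^+ 2.
Proof.
rewrite !enorm_sqr.
set a := \sum_(i < n) u 0 i ^+ 2; set b := \sum_(i < n) v 0 i ^+ 2.
set c := dotv u v.
have a0 : 0 <= a by exact: sum_sqr_ge0.
(* The discriminant trick: [sum_i (a v_i - c u_i)^2 = a (a b - c^2)]. *)
have sq_ge0 : 0 <= \sum_(i < n) (a * v 0 i - c * u 0 i) ^+ 2.
  by apply: sumr_ge0 => i _; exact: sqr_ge0.
have sqE : \sum_(i < n) (a * v 0 i - c * u 0 i) ^+ 2 = a * (a * b - c ^+ 2).
  have -> : \sum_(i < n) (a * v 0 i - c * u 0 i) ^+ 2 =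
     \sum_(i < n) (a ^+ 2 * v 0 i ^+ 2) - \sum_(i < n) (2 * a * c * (u 0 i * v 0 i))
     + \sum_(i < n) (c ^+ 2 * u 0 i ^+ 2).
    by rewrite -sumrB -big_split; apply: eq_bigr => i _ /=; ring.
  by rewrite -!mulr_sumr -/a -/b -[\sum_(i < n) (u 0 i * v 0 i)]/c; ring.
rewrite sqE in sq_ge0.
have [a_gt0|a_le0] := ltrP 0 a; first by rewrite pmulr_rge0 // subr_ge0 in sq_ge0.
have a_eq0 : a = 0 by apply/eqP; rewrite eq_le a_le0 a0.
have u0 i : u 0 i = 0.
  apply/eqP; rewrite -sqrf_eq0 eq_le sqr_ge0 andbT -a_eq0 /a.
  rewrite (bigD1 i) //= lerDl; apply: sumr_ge0 => j _; exact: sqr_ge0.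
have -> : c = 0 by rewrite /c /dotv big1 // => i _; rewrite u0 mul0r.
by rewrite a_eq0 expr0n /= mul0r.
Qed.

Lemma normr_dotv_le u v : `|dotv u v| <= enorm u * enorm v.
Proof.
rewrite -ler_sqr ?nnegrE ?mulr_ge0 ?enorm_ge0 //.
by rewrite real_normK ?num_real // exprMn dotv_sqr_le.
Qed.

Lemma enormD u v : enorm (u + v) <= enorm u + enorm v.
Proof.
rewrite -ler_sqr ?nnegrE ?addr_ge0 ?enorm_ge0 //.
have -> : enorm (u + v) ^+ 2 = enorm u ^+ 2 + 2 * dotv u v + enorm v ^+ 2.
  rewrite !enorm_sqr /dotv mulr_sumr -!big_split; apply: eq_bigr => i _ /=.
  by rewrite !mxE; ring.
have := normr_dotv_le u v; rewrite ler_norml => /andP[_ uv].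
rewrite sqrrD; lra.
Qed.

Lemma normr_coord_le v i : `|v 0 i| <= enorm v.
Proof.
rewrite -ler_sqr ?nnegrE ?enorm_ge0 // real_normK ?num_real // enorm_sqr.
rewrite (bigD1 i) //= lerDl; apply: sumr_ge0 => j _; exact: sqr_ge0.
Qed.

Lemma mxnorm_le_enorm v : `|v| <= enorm v.
Proof.
rewrite [`|v|]mx_normrE; apply: bigmax_le; first exact: enorm_ge0.
by move=> [i j] _ /=; rewrite (ord1 i); exact: normr_coord_le.
Qed.

Lemma enorm_le_mxnorm v : enorm v <= n%:R * `|v|.
Proof.
have coord_le i : `|v 0 i| <= `|v|.
  rewrite [`|v|]mx_normrE.
  exact: (le_bigmax 0 (fun ij : 'I_1 * 'I_n => `|v ij.1 ij.2|) (0, i)).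
rewrite -ler_sqr ?nnegrE ?enorm_ge0 ?mulr_ge0 // enorm_sqr.
apply: (@le_trans _ _ (\sum_(i < n) `|v| ^+ 2)).
  by apply: ler_sum => i _; rewrite -real_normK ?num_real // ler_sqr ?nnegrE.
rewrite sumr_const card_ord exprMn -[_ *+ n]mulr_natl ler_wpM2r ?sqr_ge0 //.
rewrite -natrX ler_nat; case: (n) => // m.
by rewrite expnS leq_pmulr // expn_gt0.
Qed.

Lemma enorm_eq0 v : enorm v <= 0 -> v = 0.
Proof.
move=> v_le0; apply/eqP; rewrite -normr_le0.
exact: le_trans (mxnorm_le_enorm v) v_le0.
Qed.

End EuclideanNorm.

Section RealInduction.
Variable R : realType.

Lemma real_induction (P : R -> Prop) (a b : R) : a <= b -> P a ->
  (forall c, a < c <= b -> (forall u, a <= u -> u < c -> P u) -> P c) ->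
  (forall c, a <= c < b -> P c -> exists2 d, 0 < d &
     forall u, c < u -> u < c + d -> u <= b -> P u) ->
  P b.
Proof.
move=> ab Pa left_closed right_open.
pose S := [set t | a <= t <= b /\ forall u, a <= u <= t -> P u].
have Sa : S a.
  split=> [|u /andP[au ua]]; first by rewrite lexx ab.
  by have -> : u = a by apply/eqP; rewrite eq_le ua au.
have supS : has_sup S by split; [exists a | exists b => t [/andP[_ ]]].
set c := sup S.
have ac : a <= c by exact: sup_upper_bound.
have cb : c <= b by apply: ge_sup; [exists a | move=> t [/andP[_ ]]].
have below u : a <= u -> u < c -> P u.
  move=> au uc; have cu0 : 0 < c - u by rewrite subr_gt0.
  have [t [_ Pt] ut] := sup_adherent cu0 supS.
  by apply: Pt; rewrite au /=; move: ut; rewrite /c; lra.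
have Pc : P c.
  have [<-//|ac'] := eqVneq a c.
  by apply: left_closed => //; rewrite lt_neqAle ac' ac cb.
have [cb'|bc] := ltP c b; last first.
  by have <- : c = b by apply/eqP; rewrite eq_le bc cb.
have [d d0 Pright] := right_open c (ltac:(by rewrite ac cb')) Pc.
pose t := Num.min (c + d / 2) b.
have ct : c < t by rewrite lt_min cb' andbT; lra.
have St : S t.
  split=> [|u /andP[au ut]]; first by rewrite (le_trans ac (ltW ct)) ge_min lexx orbT.
  have [uc|cu] := leP u c; last by apply: Pright => //; move: ut; rewrite le_min; lra.
  by have [->|uc'] := eqVneq u c; last by apply: below; rewrite // lt_neqAle uc' uc.
by move: ct; rewrite ltNge (sup_upper_bound supS St).
Qed.

Lemma real_induction_le0 (G : R -> R) (a b C : R) : a <= b -> G a <= 0 ->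
  (forall u c, a <= u -> u <= c -> c <= b -> G c - G u <= C * (c - u)) ->
  (forall c, a <= c < b -> exists2 d, 0 < d &
     forall h, 0 < h -> h < d -> c + h <= b -> G (c + h) <= G c) ->
  G b <= 0.
Proof.
move=> ab Ga G_left G_right; apply: (@real_induction (fun t => G t <= 0) a b) => //.
  move=> c /andP[ac cb] G_below; apply/ler_addgt0Pr => e e0; rewrite add0r.
  have C1 : 0 < `|C| + 1 by rewrite ltr_wpDl.
  pose u := Num.max a (c - e / (`|C| + 1)).
  have [au cu] : a <= u /\ c - e / (`|C| + 1) <= u by rewrite !le_max !lexx ?orbT.
  have uc : u < c by rewrite gt_max ac /= gtrBl divr_gt0.
  have := G_left u c au (ltW uc) cb; have := G_below u au uc.
  have qE : (`|C| + 1) * (e / (`|C| + 1)) = e by rewrite mulrC mulfVK ?gt_eqF.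
  have cu0 : 0 <= c - u by rewrite subr_ge0 ltW.
  have := ler_wpM2r cu0 (ler_norm C).
  have := ler_wpM2l (ltW C1) (ltac:(lra) : c - u <= e / (`|C| + 1)).
  lra.
move=> c /andP[ac cb] Gc; have [d d0 G_step] := G_right c (ltac:(by rewrite ac cb)).
exists d => // u cu ucd ub; have -> : u = c + (u - c) by ring.
by apply: le_trans Gc; apply: G_step; lra.
Qed.

End RealInduction.

Section MeanValueInequality.
Variable R : realType.
Local Notation mu := (@lebesgue_measure R).

Definition lipschitz_itv (phi : R -> R) (K a b : R) :=
  forall s u, a <= s <= b -> a <= u <= b -> `|phi s - phi u| <= K * `|s - u|.

Lemma negligible_open_cover (N : set R) (eps : R) : mu.-negligible N -> 0 < eps ->
  exists U : set R, [/\ open U, N `<=` U & (mu U < eps%:E)%E].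
Proof.
move=> [D [mD D0 ND]] eps0.
have muD : (mu D < +oo)%E by rewrite D0 ltry.
have [U [oU DU muU]] := lebesgue_regularity_outer mD muD eps0.
exists U; split => //; first exact: subset_trans DU.
have mU : measurable U by exact: measurable_realfun.open_measurable.
have UD0 : (mu (U `&` D) <= 0)%E by rewrite -D0 le_measure ?inE //; exact: measurableI.
apply: le_lt_trans muU; rewrite (measureDI mu mU mD).
by apply: (@le_trans _ _ (mu (U `\` D) + 0)%E); [apply: leeD2l | rewrite adde0].
Qed.

(* [F t] is the measure of [U `&` `]-oo, t]] for a small open cover [U] of [N]. *)
Lemma negligible_jump_fun (N : set R) (eps : R) : mu.-negligible N -> 0 < eps ->
  exists F : R -> R, [/\ {homo F : s t / s <= t}, (forall t, 0 <= F t <= eps) &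
    forall c, N c -> exists2 r, 0 < r &
      forall h, 0 < h -> h < r -> F c + h <= F (c + h)].
Proof.
move=> negN eps0; have [U [oU NU muU]] := negligible_open_cover negN eps0.
have mU : measurable U by exact: measurable_realfun.open_measurable.
pose m t := mu (U `&` `]-oo, t]%classic).
have mm t : measurable (U `&` `]-oo, t]%classic : set (measurableTypeR R)).
  exact: measurableI mU (measurable_itv _).
have m_le t : (m t <= mu U)%E by rewrite le_measure ?inE //; exact: mm.
have m_fin t : m t \is a fin_num.
  rewrite ge0_fin_numE ?measure_ge0 //; exact: le_lt_trans (m_le t) (lt_le_trans muU (leey _)).
exists (fun t => fine (m t)); split.
- move=> s t st; rewrite fine_le // le_measure ?inE ?mm //.
  by apply: setIS => x /=; rewrite !in_itv /= => xs; exact: le_trans xs st.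
- move=> t; rewrite fine_ge0 ?measure_ge0 //= -lee_fin fineK //.
  exact: le_trans (m_le t) (ltW muU).
move=> c Nc; have /nbhs_ballP [r /= r0 cU] := oU c (NU c Nc).
exists r => // h h0 hr; rewrite -lee_fin EFinD !fineK //.
have -> : m (c + h) = mu ((U `&` `]-oo, c]%classic) `|` `]c, c + h]%classic).
  congr (mu _); apply/seteqP; split => x /=; rewrite !in_itv /=.
    by move=> [Ux xch]; have [xc|cx] := leP x c; [left | right; rewrite xch].
  case=> [[Ux xc]|/andP[cx xch]]; split => //; first lra.
  by apply: cU; rewrite /ball /= ltr_distlC; apply/andP; split; lra.
have -> : mu ((U `&` `]-oo, c]%classic) `|` `]c, c + h]%classic) =
    (m c + mu `]c, (c + h)%R]%classic)%E.
  apply: measureU; [exact: mm | exact: measurable_itv |].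
  by rewrite -subset0 => x [[_ /=]]; rewrite !in_itv /= => xc /andP[cx _]; lra.
by rewrite lebesgue_measure_itv /= lte_fin ltrDl h0 -EFinD addrAC subrr add0r.
Qed.

Lemma lipschitz_mvi (phi : R -> R) (a b K M : R) (N : set R) :
  a <= b -> 0 <= K -> mu.-negligible N -> lipschitz_itv phi K a b ->
  (forall t, a <= t < b -> ~ N t -> forall e, 0 < e -> exists2 d, 0 < d &
     forall h, 0 < h -> h < d -> t + h <= b -> phi (t + h) - phi t <= (M + e) * h) ->
  phi b - phi a <= M * (b - a).
Proof.
move=> ab K0 negN lip der; apply/ler_addgt0Pr => e e0.
pose C := K + `|M|.
have C0 : 0 <= C by rewrite addr_ge0.
pose eps := e / (2 * (b - a) + C + 1).
have eps0 : 0 < eps by rewrite divr_gt0 //; lra.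
have epsE : eps * (2 * (b - a) + C + 1) = e by rewrite /eps mulfVK // gt_eqF //; lra.
have [F [F_homo F_bnd F_jump]] := negligible_jump_fun negN eps0.
(* Off [N] the slope [M + eps] of [phi] is beaten by [M + 2 eps]; at points of
   [N] the penalty [C F] grows faster than [phi] can. *)
pose G t := phi t - phi a - (M + 2 * eps) * (t - a) - C * (F t - F a).
have lip_step s u : a <= s -> s <= u -> u <= b -> phi u - phi s <= K * (u - s).
  move=> as_ su ub; have := lip u s (ltac:(apply/andP; split; lra)) (ltac:(apply/andP; split; lra)).
  by rewrite [`|u - s|]ger0_norm ?subr_ge0 //; exact: le_trans (ler_norm _).
have Gb : G b <= 0.
  apply: (@real_induction_le0 R G a b (K + `|M + 2 * eps|) ab); first by rewrite /G; lra.
    move=> u c au uc cb; have := lip_step u c au uc cb.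
    have : C * F u <= C * F c by rewrite ler_wpM2l // F_homo.
    have := ler_wpM2r (ltac:(by rewrite subr_ge0) : 0 <= c - u) (ler_norm (- (M + 2 * eps))).
    by rewrite normrN /G; nra.
  move=> c /andP[ac cb].
  have [Nc|Nc] := pselect (N c).
    have [r r0 F_step] := F_jump c Nc; exists r => // h h0 hr chb.
    have := lip_step c (c + h) ac (ltac:(lra)) chb.
    have : C * (F c + h) <= C * F (c + h) by exact: ler_wpM2l (F_step h h0 hr).
    have : - (M + 2 * eps) * h <= `|M| * h.
      by apply: ler_wpM2r; [exact: ltW | have := ler_norm (- M); rewrite normrN; lra].
    rewrite /G /C; nra.
  have [d d0 D_step] := der c (ltac:(by rewrite ac cb)) Nc eps eps0.
  exists d => // h h0 hd chb; have := D_step h h0 hd chb.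
  have : C * F c <= C * F (c + h) by rewrite ler_wpM2l // F_homo //; lra.
  rewrite /G; nra.
have := F_bnd a; have := F_bnd b; move: Gb; rewrite /G => Gb /andP[Fb0 Fbe] /andP[Fa0 Fae].
have : C * (F b - F a) <= C * eps by rewrite ler_wpM2l //; lra.
have : 2 * eps * (b - a) + C * eps <= e by rewrite -epsE; nra.
nra.
Qed.

Lemma lipschitz_mvi_norm (phi : R -> R) (a b K M : R) (N : set R) :
  a <= b -> 0 <= K -> mu.-negligible N -> lipschitz_itv phi K a b ->
  (forall t, a <= t < b -> ~ N t -> forall e, 0 < e -> exists2 d, 0 < d &
     forall h, 0 < h -> h < d -> t + h <= b -> `|phi (t + h) - phi t| <= (M + e) * h) ->
  `|phi b - phi a| <= M * (b - a).
Proof.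
move=> ab K0 negN lip der; rewrite ler_norml; apply/andP; split.
  rewrite lerNl opprB.
  have lipN : lipschitz_itv (fun t => - phi t) K a b.
    by move=> s u hs hu; rewrite opprK addrC distrC; exact: lip.
  rewrite -[phi a]opprK addrC; apply: (lipschitz_mvi ab K0 negN lipN) => t ht Nt e e0.
  have [d d0 Dstep] := der t ht Nt e e0; exists d => // h h0 hd thb.
  by rewrite opprK addrC; apply: le_trans (Dstep h h0 hd thb); rewrite distrC ler_norm.
apply: (lipschitz_mvi ab K0 negN lip) => t ht Nt e e0.
have [d d0 Dstep] := der t ht Nt e e0; exists d => // h h0 hd thb.
exact: le_trans (ler_norm _) (Dstep h h0 hd thb).
Qed.

End MeanValueInequality.

Section PolygonalLength.
Variables (R : realType) (n : nat).

Lemma poly_len_rcons (g : R -> 'rV[R]_n) a s v :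
  poly_len g a (rcons s v) = poly_len g a s + enorm (g v - g (last a s)).
Proof. by elim: s a => [|t s ih] a /=; [rewrite addr0 add0r | rewrite ih addrA]. Qed.

Lemma poly_len_ge0 (g : R -> 'rV[R]_n) a s : 0 <= poly_len g a s.
Proof. by elim: s a => [|t s ih] a //=; rewrite addr_ge0 ?enorm_ge0. Qed.

Lemma itv_partition_rcons (a u v : R) s : u < v ->
  itv_partition a u s -> itv_partition a v (rcons s v).
Proof.
move=> uv [ps /eqP ls]; split; first by rewrite rcons_path ps ls.
by rewrite last_rcons.
Qed.

Lemma itv_partition_exists (a t : R) : a <= t -> exists s, itv_partition a t s.
Proof.
move=> at_; have [<-|at'] := eqVneq a t; first by exists [::].
by exists [:: t]; apply: itv_partition1; rewrite lt_neqAle at' at_.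
Qed.

End PolygonalLength.

(* Reparametrization of a rectifiable path by arc length: [arclen_inv s] is the
   last time at which the length travelled does not exceed [s]. *)
Section ArcLength.
Variables (R : realType) (n : nat) (g : R -> 'rV[R]_n) (a b L : R).
Hypothesis ab : a <= b.
Hypothesis g_cont : cont_on_itv g a b.
Hypothesis g_len : forall s, itv_partition a b s -> poly_len g a s <= L.

Definition poly_lens t := [set poly_len g a s | s in [set s | itv_partition a t s]].
Definition arclen t := sup (poly_lens t).

Lemma poly_len_bounded t s : a <= t <= b -> itv_partition a t s -> poly_len g a s <= L.
Proof.
move=> /andP[at_ tb] ats; have [tb'|bt] := ltP t b.
  apply: le_trans (g_len (itv_partition_rcons tb' ats)).
  by rewrite poly_len_rcons lerDl enorm_ge0.
have tbE : t = b by apply/eqP; rewrite eq_le tb bt.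
by apply: g_len; rewrite -tbE.
Qed.

Lemma poly_lens_nonempty t : a <= t -> poly_lens t !=set0.
Proof. by move=> /itv_partition_exists [s ats]; exists (poly_len g a s), s. Qed.

Lemma has_sup_poly_lens t : a <= t <= b -> has_sup (poly_lens t).
Proof.
move=> abt; split; first exact: poly_lens_nonempty (proj1 (andP abt)).
by exists L => _ [s ats <-]; exact: poly_len_bounded abt ats.
Qed.

Lemma poly_len_le_arclen t s : a <= t <= b -> itv_partition a t s ->
  poly_len g a s <= arclen t.
Proof. by move=> abt ats; apply: sup_upper_bound; [exact: has_sup_poly_lens | exists s]. Qed.

Lemma arclen_ge0 t : a <= t <= b -> 0 <= arclen t.
Proof.
move=> abt; have [s ats] := itv_partition_exists (proj1 (andP abt)).
exact: le_trans (poly_len_ge0 _ _ _) (poly_len_le_arclen abt ats).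
Qed.

Lemma arclen_le t : a <= t <= b -> arclen t <= L.
Proof.
move=> abt; apply: ge_sup; first exact: poly_lens_nonempty (proj1 (andP abt)).
by move=> _ [s ats <-]; exact: poly_len_bounded abt ats.
Qed.

Lemma arclenD_chord_le u v : a <= u -> u < v -> v <= b ->
  arclen u + enorm (g v - g u) <= arclen v.
Proof.
move=> au uv vb; have abv : a <= v <= b by rewrite (le_trans au (ltW uv)) vb.
rewrite -lerBrDr; apply: ge_sup; first exact: poly_lens_nonempty.
move=> _ [s aus <-]; rewrite lerBrDr.
have := poly_len_le_arclen abv (itv_partition_rcons uv aus).
by rewrite poly_len_rcons; case: aus => _ /eqP ->.
Qed.

Lemma le_arclen u v : a <= u -> u <= v -> v <= b -> arclen u <= arclen v.
Proof.
move=> au uv vb; have [->//|uv'] := eqVneq u v.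
have {}uv : u < v by rewrite lt_neqAle uv' uv.
have := arclenD_chord_le au uv vb.
have := enorm_ge0 (g v - g u); lra.
Qed.

(* Continuity of [g] at both ends lets the chord between [t1] and [t2] be
   approximated by chords strictly inside [(t1, t2)]. *)
Lemma chord_le_arclen_gap t1 t2 s1 s2 : a <= t1 -> t1 < t2 -> t2 <= b ->
  (forall u, t1 < u -> u <= b -> s1 <= arclen u) ->
  (forall v, a <= v -> v < t2 -> arclen v <= s2) ->
  enorm (g t2 - g t1) <= s2 - s1.
Proof.
move=> a1 t12 t2b s1_le le_s2; apply/ler_addgt0Pr => e e0.
have e20 : 0 < e / 2 by rewrite divr_gt0.
have abt1 : a <= t1 <= b by rewrite a1 (le_trans (ltW t12) t2b).
have abt2 : a <= t2 <= b by rewrite (le_trans a1 (ltW t12)) t2b.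
have [d1 d10 near1] := g_cont abt1 e20.
have [d2 d20 near2] := g_cont abt2 e20.
pose d := Num.min (Num.min d1 d2) (t2 - t1) / 3.
have d0 : 0 < d by rewrite divr_gt0 // !lt_min d10 d20 subr_gt0 t12.
have dle : [/\ d <= d1 / 3, d <= d2 / 3 & d <= (t2 - t1) / 3].
  by split; rewrite ler_pM2r ?invr_gt0 // !ge_min lexx ?orbT.
case: dle => d1_le d2_le dt_le; clearbody d.
have chord1 := near1 (t1 + d) (ltac:(apply/andP; split; lra))
  (ltac:(by rewrite addrAC subrr add0r gtr0_norm //; lra)).
have chord2 := near2 (t2 - d) (ltac:(apply/andP; split; lra))
  (ltac:(by rewrite addrAC subrr add0r normrN gtr0_norm //; lra)).
rewrite enorm_distC in chord2.
have inner := arclenD_chord_le (ltac:(lra) : a <= t1 + d) (ltac:(lra) : t1 + d < t2 - d)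
  (ltac:(lra) : t2 - d <= b).
have := s1_le (t1 + d) (ltac:(lra)) (ltac:(lra)).
have := le_s2 (t2 - d) (ltac:(lra)) (ltac:(lra)).
have -> : g t2 - g t1 =
    (g t2 - g (t2 - d)) + (g (t2 - d) - g (t1 + d)) + (g (t1 + d) - g t1).
  by rewrite -!addrA !addKr.
have := enormD (g t2 - g (t2 - d) + (g (t2 - d) - g (t1 + d))) (g (t1 + d) - g t1).
have := enormD (g t2 - g (t2 - d)) (g (t2 - d) - g (t1 + d)).
lra.
Qed.

Definition arclen_sublevel s := [set t | a <= t <= b /\ (t = a \/ arclen t <= s)].
Definition arclen_inv s := sup (arclen_sublevel s).

Lemma arclen_sublevel_a s : arclen_sublevel s a.
Proof. by split; [rewrite lexx ab | left]. Qed.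

Lemma has_sup_arclen_sublevel s : has_sup (arclen_sublevel s).
Proof. by split; [exists a; exact: arclen_sublevel_a | exists b => t [/andP[_ ]]]. Qed.

Lemma arclen_inv_itv s : a <= arclen_inv s <= b.
Proof.
apply/andP; split.
  by apply: sup_upper_bound; [exact: has_sup_arclen_sublevel | exact: arclen_sublevel_a].
by apply: ge_sup; [exists a; exact: arclen_sublevel_a | move=> t [/andP[_ ]]].
Qed.

Lemma le_arclen_inv s1 s2 : s1 <= s2 -> arclen_inv s1 <= arclen_inv s2.
Proof.
move=> s12; apply: ge_sup; first by exists a; exact: arclen_sublevel_a.
move=> t [abt s1t]; apply: sup_upper_bound; first exact: has_sup_arclen_sublevel.
by split=> //; case: s1t => [|s1t]; [left | right; exact: le_trans s12].
Qed.

Lemma arclen_right_of_inv s u : arclen_inv s < u -> u <= b -> s <= arclen u.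
Proof.
move=> su ub; rewrite leNgt; apply/negP => us.
have au : a <= u by case/andP: (arclen_inv_itv s) => as_ _; exact: le_trans as_ (ltW su).
have := sup_upper_bound (has_sup_arclen_sublevel s) (conj (introT andP (conj au ub)) (or_intror (ltW us))).
by rewrite -/(arclen_inv s) leNgt su.
Qed.

Lemma arclen_left_of_inv s v : a <= v -> v < arclen_inv s -> arclen v <= s.
Proof.
move=> av vs; have e0 : 0 < arclen_inv s - v by rewrite subr_gt0.
have [t [/andP[_ tb] [ta|ts]] vt] := sup_adherent e0 (has_sup_arclen_sublevel s).
  by move: vt; rewrite ta /arclen_inv; lra.
by apply: le_trans ts; apply: le_arclen => //; move: vt; rewrite /arclen_inv; lra.
Qed.

Lemma arclen_inv_lipschitz s1 s2 : 0 <= s1 -> s1 <= s2 ->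
  enorm (g (arclen_inv s2) - g (arclen_inv s1)) <= s2 - s1.
Proof.
move=> s10 s12; have [->|ne] := eqVneq (arclen_inv s1) (arclen_inv s2).
  by rewrite subrr enorm0 subr_ge0.
have [/andP[as1 _] /andP[_ s2b]] := (arclen_inv_itv s1, arclen_inv_itv s2).
apply: chord_le_arclen_gap => //; last exact: arclen_left_of_inv.
  by rewrite lt_neqAle ne le_arclen_inv.
exact: arclen_right_of_inv.
Qed.

Lemma arclen_inv0 : g (arclen_inv 0) = g a.
Proof.
have [<-//|ne] := eqVneq a (arclen_inv 0).
have /andP[as0 s0b] := arclen_inv_itv 0.
apply/subr0_eq/enorm_eq0; apply: (@le_trans _ _ (0 - 0)); last by rewrite subrr.
apply: chord_le_arclen_gap => //; first by rewrite lt_neqAle ne.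
  by move=> u au ub; apply: arclen_ge0; rewrite ub (ltW au).
exact: arclen_left_of_inv.
Qed.

Lemma arclen_inv_arclen_b : arclen_inv (arclen b) = b.
Proof.
apply/eqP; rewrite eq_le; case/andP: (arclen_inv_itv (arclen b)) => _ -> /=.
by apply: sup_upper_bound; [exact: has_sup_arclen_sublevel | split; [rewrite ab lexx | right]].
Qed.

End ArcLength.

Lemma joined_by_path_unit_speed (R : realType) (n : nat) (E : set 'rV[R]_n)
    (x y : 'rV[R]_n) (L : R) :
  joined_by_path E x y L -> exists l, exists p : R -> 'rV[R]_n,
    [/\ 0 <= l <= L, p 0 = x, p l = y, forall s, E (p s) &
        forall s u, 0 <= s -> 0 <= u -> enorm (p s - p u) <= `|s - u|].
Proof.
move=> [a [b [g [ab ga [gb gE] g_cont g_len]]]].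
have g_len' s : itv_partition a b s -> poly_len g a s <= L.
  move=> abs; rewrite -lee_fin; apply: le_trans g_len.
  by apply: ereal_sup_ubound; exists s.
have abb : a <= b <= b by rewrite ab lexx.
exists (arclen g a b), (fun s => g (arclen_inv g a b s)); split.
- by rewrite (arclen_ge0 g_len' abb) (arclen_le g_len' abb).
- by rewrite (@arclen_inv0 R n g a b L ab g_cont g_len').
- by rewrite (@arclen_inv_arclen_b R n g a b ab).
- by move=> s; apply: gE; exact: arclen_inv_itv.
have unit_speed := @arclen_inv_lipschitz R n g a b L ab g_cont g_len'.
move=> s u s0 u0; have [us|su] := leP u s.
  by rewrite ger0_norm ?subr_ge0 //; exact: unit_speed.
rewrite enorm_distC distrC gtr0_norm ?subr_gt0 //.
by apply: unit_speed => //; exact: ltW.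
Qed.

Lemma loc_lipschitz_path_unit_speed (R : realType) (n : nat) (p : R -> 'rV[R]_n) (l : R) :
  (forall s u, 0 <= s -> 0 <= u -> enorm (p s - p u) <= `|s - u|) ->
  loc_lipschitz_path [set` `[0, l]] p.
Proof.
move=> p_lip t _; exists 1 => //; exists 1 => s u.
by rewrite /= !in_itv /= mul1r => /andP[s0 _] /andP[u0 _] _ _; exact: p_lip.
Qed.

Section BoundedOscillation.
Variables (R : realType) (n : nat).

Lemma ball_enorm_lt (c w : 'rV[R]_n) (r : R) : 0 < r ->
  ball c (r / n.+1%:R) w -> enorm (w - c) < r.
Proof.
move=> r0; rewrite -ball_normE /ball_ /= => cw.
apply: le_lt_trans (enorm_le_mxnorm _) _; rewrite -normrN opprB.
apply: (@le_lt_trans _ _ (n.+1%:R * `|c - w|)); first by rewrite ler_wpM2r // ler_nat.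
by rewrite mulrC -ltr_pdivlMr ?ltr0n.
Qed.

Lemma closed_enorm_ball (x : 'rV[R]_n) (r : R) : closed [set w | enorm (x - w) <= r].
Proof.
move=> w clw /=; rewrite leNgt; apply/negP => rw.
have rho0 : 0 < enorm (x - w) - r by rewrite subr_gt0.
have [v [/= xv wv]] := clw _ (nbhsx_ballx w _ (divr_gt0 rho0 (ltr0Sn R n))).
have := ball_enorm_lt rho0 wv; have := enormD (x - v) (v - w).
by rewrite addrA subrK; lra.
Qed.

Lemma has_sup_cont_on_ball (E : set 'rV[R]_n) (A : 'rV[R]_n -> 'rV[R]_n)
    (x : 'rV[R]_n) (r : R) :
  closed E -> cont_on E A -> E x -> 0 <= r ->
  has_sup [set enorm (A w - A x) | w in [set w | E w /\ enorm (x - w) <= r]].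
Proof.
move=> cE cA Ex r0; set K := [set w | E w /\ enorm (x - w) <= r].
split; first by exists 0, x; rewrite /K /= subrr enorm0.
have K_bounded : bounded_set K.
  rewrite /= /bounded_near; near=> M => w [_ xw] /=.
  apply: (@le_trans _ _ (`|x| + r)); last by near: M; apply: nbhs_pinfty_ge; exact: num_real.
  have -> : w = x - (x - w) by rewrite opprB addrC subrK.
  by apply: le_trans (ler_normB _ _) _; rewrite lerD2l (le_trans (mxnorm_le_enorm _)).
have K_compact : compact K.
  by apply: bounded_closed_compact => //; apply: closedI => //; exact: closed_enorm_ball.
(* Cover [K] by balls on which [A] oscillates by less than [1]. *)
pose P w := [set d : R | 0 < d /\ forall v, E v -> enorm (v - w) < d -> enorm (A v - A w) < 1].
have radP w : E w -> P w (get (P w)).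
  by move=> Ew; apply: getPex; have [d d0 Ad] := cA w Ew 1 ltr01; exists d.
move: K_compact; rewrite compact_cover => /(_ _ K (fun w => ball w (get (P w) / n.+1%:R))).
case=> [w _|w Kw|D DK Kcov]; first exact: ball_open.
  exists w => //; apply: ballxx; rewrite divr_gt0 ?ltr0n //.
  by case: (radP w (proj1 Kw)).
exists (\big[Num.max/0]_(v <- finmap.enum_fset D) enorm (A v - A x) + 1) => _ [w Kw <-].
have [v Dv wv] := Kcov w Kw.
have /[!in_setE] Kv : v \in K by exact: DK.
have [rv0 Av] := radP v (proj1 Kv).
have := Av w (proj1 Kw) (ball_enorm_lt rv0 wv).
have := enormD (A w - A v) (A v - A x); rewrite addrA subrK.
have := le_bigmax_seq 0 v xpredT (fun v => enorm (A v - A x)) Dv isT.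
lra.
Unshelve. all: by end_near.
Qed.

End BoundedOscillation.

Section LocalToGlobalLipschitz.
Variable R : realType.
Implicit Types phi : R -> R.

Lemma lipschitz_itv_cat phi (K1 K2 a m b : R) : a <= m <= b -> 0 <= K1 -> 0 <= K2 ->
  lipschitz_itv phi K1 a m -> lipschitz_itv phi K2 m b ->
  lipschitz_itv phi (K1 + K2) a b.
Proof.
move=> /andP[am mb] K10 K20 lip1 lip2.
suff lip_le s u : a <= s -> s <= u -> u <= b ->
    `|phi s - phi u| <= (K1 + K2) * `|s - u|.
  move=> s u /andP[as_ sb] /andP[au ub]; have [su|us] := leP s u; first exact: lip_le.
  by rewrite distrC [`|s - u|]distrC; apply: lip_le => //; exact: ltW.
move=> as_ su ub; rewrite [`|s - u|]distrC [`|u - s|]ger0_norm ?subr_ge0 //.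
have [um|mu] := leP u m.
  have := lip1 s u (ltac:(apply/andP; split; lra)) (ltac:(apply/andP; split; lra)).
  rewrite [`|s - u|]distrC [`|u - s|]ger0_norm ?subr_ge0 //; nra.
have [sm|ms] := leP s m; last first.
  have := lip2 s u (ltac:(apply/andP; split; lra)) (ltac:(apply/andP; split; lra)).
  rewrite [`|s - u|]distrC [`|u - s|]ger0_norm ?subr_ge0 //; nra.
have := lip1 s m (ltac:(apply/andP; split; lra)) (ltac:(apply/andP; split; lra)).
have := lip2 m u (ltac:(apply/andP; split; lra)) (ltac:(apply/andP; split; lra)).
rewrite [`|m - u|]distrC [`|s - m|]distrC [`|u - m|]ger0_norm ?[`|m - s|]ger0_norm ?subr_ge0 //; last exact: ltW.
have := ler_normD (phi s - phi m) (phi m - phi u); rewrite addrA subrK.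
nra.
Qed.

Lemma loc_lipschitz_itv phi (a b : R) : a <= b ->
  (forall t, a <= t <= b -> exists2 d, 0 < d & exists2 K, 0 <= K &
     forall s u, a <= s <= b -> a <= u <= b -> `|s - t| < d -> `|u - t| < d ->
       `|phi s - phi u| <= K * `|s - u|) ->
  exists2 K, 0 <= K & lipschitz_itv phi K a b.
Proof.
move=> ab loc.
apply: (@real_induction R (fun c => exists2 K, 0 <= K & lipschitz_itv phi K a c) a b ab).
- exists 0 => // s u /andP[as_ sa] /andP[au ua].
  have [-> ->] : s = a /\ u = a by split; apply/eqP; rewrite eq_le ?sa ?ua.
  by rewrite subrr normr0 mul0r.
- move=> c /andP[ac cb] IH.
  have [d d0 [Kc Kc0 lip_c]] := loc c (ltac:(by rewrite (ltW ac) cb)).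
  pose m := Num.max a (c - d / 2).
  have [am cdm] : a <= m /\ c - d / 2 <= m by rewrite !le_max !lexx ?orbT.
  have lip_mc : lipschitz_itv phi Kc m c.
    move=> s u /andP[ms sc] /andP[mu uc]; apply: lip_c.
    - by apply/andP; split; lra.
    - by apply/andP; split; lra.
    - by rewrite distrC ger0_norm ?subr_ge0 //; lra.
    - by rewrite distrC ger0_norm ?subr_ge0 //; lra.
  have [ma|ma] := eqVneq m a; first by exists Kc => //; rewrite -ma.
  have mc : m < c by rewrite gt_max ac /=; lra.
  have [K1 K10 lip_am] := IH m am mc.
  exists (K1 + Kc); first exact: addr_ge0.
  by apply: lipschitz_itv_cat lip_am lip_mc => //; rewrite am (ltW mc).
- move=> c /andP[ac cb] [K1 K10 lip_ac].
  have [d d0 [Kc Kc0 lip_c]] := loc c (ltac:(by rewrite ac (ltW cb))).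
  exists (d / 2); first by rewrite divr_gt0.
  move=> u cu ucd ub; exists (K1 + Kc); first exact: addr_ge0.
  apply: lipschitz_itv_cat lip_ac _ => //; first by rewrite ac (ltW cu).
  move=> s v /andP[cs su] /andP[cv vu]; apply: lip_c.
  - by apply/andP; split; lra.
  - by apply/andP; split; lra.
  - by rewrite ger0_norm ?subr_ge0 //; lra.
  - by rewrite ger0_norm ?subr_ge0 //; lra.
Qed.

End LocalToGlobalLipschitz.

Section RightDifferenceQuotients.
Variable R : realType.

Lemma derivable_approx_right (V : normedModType R) (p : R -> V) (t : R) :
  derivable p t 1 -> forall e, 0 < e -> exists2 d, 0 < d &
    forall h, 0 < h -> h < d -> `|p (t + h) - p t - h *: derive1 p t| <= e * h.
Proof.
move=> dp e e0.
have /cvgrPdist_lt /(_ e e0) : (h^-1 *: ((p \o shift t) (h *: 1) - p t)) @[h --> 0^'] --> 'D_1 p t.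
  exact: dp.
rewrite /= near_withinE => /nbhs_ballP [d d0 near_t].
exists d => // h h0 hd.
have := near_t h (ltac:(by rewrite /ball /= sub0r normrN gtr0_norm)) (lt0r_neq0 h0).
rewrite -derive1E /= /shift [h *: 1]mulr1 [h + t]addrC => quot_lt.
have -> : p (t + h) - p t - h *: derive1 p t =
    - (h *: (derive1 p t - h^-1 *: (p (t + h) - p t))).
  by rewrite scalerBr scalerA mulfV ?gt_eqF // scale1r opprB addrC.
by rewrite normrN normrZ gtr0_norm // mulrC ltW // ltr_pM2r.
Qed.

Variable n : nat.
Implicit Type p : R -> 'rV[R]_n.

Lemma derivable_enorm_approx_right p (t : R) :
  derivable p t 1 -> forall e, 0 < e -> exists2 d, 0 < d &
    forall h, 0 < h -> h < d -> enorm (p (t + h) - p t - h *: derive1 p t) <= e * h.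
Proof.
move=> dp e e0; have n1 : 0 < n%:R + 1 :> R by rewrite ltr_wpDl.
have [d d0 approx] := derivable_approx_right dp (divr_gt0 e0 n1).
exists d => // h h0 hd; apply: le_trans (enorm_le_mxnorm _) _.
apply: le_trans (ler_wpM2l (ler0n _ _) (approx h h0 hd)) _.
rewrite mulrA; apply: ler_wpM2r; first exact: ltW.
rewrite mulrCA; apply: ler_piMr; first exact: ltW.
by rewrite ler_pdivrMr //; lra.
Qed.

Lemma enorm_derive1_le p (t K : R) : derivable p t 1 ->
  (forall h, 0 < h -> enorm (p (t + h) - p t) <= K * h) -> enorm (derive1 p t) <= K.
Proof.
move=> dp p_lip; apply/ler_addgt0Pr => e e0.
have [d d0 approx] := derivable_enorm_approx_right dp e0.
have [h0 hd] : 0 < d / 2 /\ d / 2 < d by split; lra.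
set h := d / 2 in h0 hd *; set P' := derive1 p t.
rewrite -(ler_pM2l h0) mulrDr [h * K]mulrC [h * e]mulrC.
have -> : h * enorm P' = enorm (h *: P') by rewrite enormZ gtr0_norm.
have -> : h *: P' = (p (t + h) - p t) - (p (t + h) - p t - h *: P') by rewrite opprB addrC subrK.
apply: le_trans (enormD _ _) _; rewrite enormN.
exact: lerD (p_lip h h0) (approx h h0 hd).
Qed.

(* To first order the increment of [g] is [dotv a] of the increment of [p],
   whose velocity is at most [1]; and [dotv c] is within [M] of [dotv a]. *)
Lemma dotv_increment_le (g : R -> R) p (a c : 'rV[R]_n) (t M : R) :
  derivable g t 1 -> derivable p t 1 -> derive1 g t = dotv a (derive1 p t) ->
  (forall h, 0 < h -> enorm (p (t + h) - p t) <= h) -> enorm (a - c) <= M ->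
  forall e, 0 < e -> exists2 d, 0 < d & forall h, 0 < h -> h < d ->
    `|g (t + h) - g t - dotv c (p (t + h) - p t)| <= (M + e) * h.
Proof.
move=> dg dp g'E p_step ac_le e e0.
have p'_le : enorm (derive1 p t) <= 1.
  by apply: enorm_derive1_le dp _ => h h0; rewrite mul1r; exact: p_step.
set P' := derive1 p t.
pose e2 := e / (2 * (enorm c + 1)).
have c1 : 0 < 2 * (enorm c + 1) by rewrite mulr_gt0 // ltr_wpDl ?enorm_ge0.
have e2_gt0 : 0 < e2 by rewrite divr_gt0.
have e2E : e2 * (2 * (enorm c + 1)) = e by rewrite /e2 mulfVK ?gt_eqF.
have [dg0 dg0_pos g_approx] := derivable_approx_right dg (divr_gt0 e0 (ltr0Sn R 1)).
have [dp0 dp0_pos p_approx] := derivable_enorm_approx_right dp e2_gt0.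
exists (Num.min dg0 dp0) => [|h h0]; first by rewrite lt_min dg0_pos dp0_pos.
rewrite lt_min => /andP[/(g_approx h h0) gh /(p_approx h h0) ph].
rewrite g'E in gh; have {}gh : `|g (t + h) - g t - h * dotv a P'| <= e / 2 * h := gh.
have -> : g (t + h) - g t - dotv c (p (t + h) - p t) =
    (g (t + h) - g t - h * dotv a P') + h * dotv (a - c) P'
    - dotv c (p (t + h) - p t - h *: P').
  by rewrite !dotvBr dotvBl dotvZr; ring.
have ac_P' : `|dotv (a - c) P'| <= M.
  apply: le_trans (normr_dotv_le _ _) _; rewrite -[M]mulr1.
  by apply: ler_pM; rewrite ?enorm_ge0.
have c_rem : `|dotv c (p (t + h) - p t - h *: P')| <= e / 2 * h.
  apply: le_trans (normr_dotv_le _ _) _.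
  apply: le_trans (ler_wpM2l (enorm_ge0 c) ph) _.
  have -> : e / 2 = e2 * (enorm c + 1) by rewrite -e2E; field.
  have := mulr_ge0 (ltW e2_gt0) (ltW h0); lra.
have := ler_normB (g (t + h) - g t - h * dotv a P' + h * dotv (a - c) P')
  (dotv c (p (t + h) - p t - h *: P')).
have := ler_normD (g (t + h) - g t - h * dotv a P') (h * dotv (a - c) P').
rewrite normrM gtr0_norm //.
have : h * `|dotv (a - c) P'| <= h * M by rewrite ler_pM2l.
lra.
Qed.

End RightDifferenceQuotients.

Lemma lipschitz_itv_comp_sub_dotv (R : realType) (n : nat) (E : set 'rV[R]_n)
    (f : 'rV[R]_n -> R) (p : R -> 'rV[R]_n) (c : 'rV[R]_n) (a b : R) :
  a <= b -> loc_lipschitz_on E f -> (forall s, a <= s <= b -> E (p s)) ->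
  (forall s u, a <= s <= b -> a <= u <= b -> enorm (p s - p u) <= `|s - u|) ->
  exists2 K, 0 <= K & lipschitz_itv (fun t => f (p t) - dotv c (p t)) K a b.
Proof.
move=> ab f_lip pE p_lip; apply: loc_lipschitz_itv => // t abt.
have [d d0 [Lf f_lip_t]] := f_lip (p t) (pE t abt).
exists d => //; exists (`|Lf| + enorm c); first by rewrite addr_ge0 ?enorm_ge0.
move=> s u abs abu st ut.
have := f_lip_t _ _ (pE s abs) (pE u abu)
  (le_lt_trans (p_lip s t abs abt) st) (le_lt_trans (p_lip u t abu abt) ut).
have := normr_dotv_le c (p s - p u).
have -> : f (p s) - dotv c (p s) - (f (p u) - dotv c (p u)) =
    (f (p s) - f (p u)) - dotv c (p s - p u) by rewrite dotvBr; ring.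
have := ler_normB (f (p s) - f (p u)) (dotv c (p s - p u)).
have := le_trans (ler_wpM2r (enorm_ge0 _) (ler_norm Lf))
  (ler_wpM2l (normr_ge0 Lf) (p_lip s u abs abu)).
have := ler_wpM2l (enorm_ge0 c) (p_lip s u abs abu).
lra.
Qed.

Lemma unit_speed_mvi (R : realType) (n : nat) (E : set 'rV[R]_n)
    (A : 'rV[R]_n -> 'rV[R]_n) (f : 'rV[R]_n -> R) (p : R -> 'rV[R]_n)
    (c : 'rV[R]_n) (l M : R) (N : set R) :
  0 <= l -> loc_lipschitz_on E f -> (forall s, E (p s)) ->
  (forall s u, 0 <= s -> 0 <= u -> enorm (p s - p u) <= `|s - u|) ->
  (@lebesgue_measure R).-negligible N ->
  (forall t, 0 <= t <= l -> ~ N t ->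
     [/\ derivable (f \o p) t 1, derivable p t 1 &
         derive1 (f \o p) t = dotv (A (p t)) (derive1 p t)]) ->
  (forall t, 0 <= t <= l -> enorm (A (p t) - c) <= M) ->
  `|f (p l) - f (p 0) - dotv c (p l - p 0)| <= M * l.
Proof.
move=> l0 f_lip pE p_lip negN p_deriv A_near.
have p_lip_itv s u : 0 <= s <= l -> 0 <= u <= l -> enorm (p s - p u) <= `|s - u|.
  by move=> /andP[s0 _] /andP[u0 _]; exact: p_lip.
have [K K0 phi_lip] := lipschitz_itv_comp_sub_dotv c l0 f_lip (fun s _ => pE s) p_lip_itv.
have -> : f (p l) - f (p 0) - dotv c (p l - p 0) =
    f (p l) - dotv c (p l) - (f (p 0) - dotv c (p 0)) by rewrite dotvBr; ring.
rewrite -[in M * l](subr0 l).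
apply: (lipschitz_mvi_norm l0 K0 negN phi_lip) => t /andP[t0 tl] Nt e e0.
have [dfp dp fp'E] := p_deriv t (ltac:(by rewrite t0 ltW)) Nt.
have p_step h : 0 < h -> enorm (p (t + h) - p t) <= h.
  move=> h0; have th0 : 0 <= t + h by lra.
  by apply: le_trans (p_lip _ _ th0 t0) _; rewrite addrAC subrr add0r gtr0_norm.
have [d d0 incr] := dotv_increment_le dfp dp fp'E p_step (A_near t (ltac:(by rewrite t0 ltW))) e0.
exists d => // h h0 hd _; have := incr h h0 hd.
by rewrite dotvBr /=; congr (`|_| <= _); ring.
Qed.

Unset Implicit Arguments.

Theorem mainTheorem2 (R : realType) (n : nat) (E : set 'rV[R]_n) (k : R)
  (A : 'rV[R]_n -> 'rV[R]_n) (f : 'rV[R]_n -> R) :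
  closed E ->
  1 <= k ->
  (forall x y, E x -> E y -> joined_by_path E x y (k * enorm (x - y))) ->
  cont_on E A ->
  loc_lipschitz_on E f ->
  (forall (I : interval R) (p : R -> 'rV[R]_n),
      (forall t, [set` I] t -> E (p t)) ->
      loc_lipschitz_path [set` I] p ->
      {ae (@lebesgue_measure R), forall t, [set` I] t ->
         [/\ derivable (f \o p) t 1, derivable p t 1 &
             derive1 (f \o p) t = dotv (A (p t)) (derive1 p t)]}) ->
  forall x y, E x -> E y ->
    `|f y - f x - dotv (A x) (y - x)| <=
      k * enorm (x - y) *
      sup [set enorm (A w - A x) | w in
             [set w | E w /\ enorm (x - w) <= k * enorm (x - y)]].
Proof.
move=> cE k1 joined cA f_lip f_deriv x y Ex Ey.
have [l [p [/andP[l0 lL] p0 pl pE p_lip]]] := joined_by_path_unit_speed (joined x y Ex Ey).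
have L0 : 0 <= k * enorm (x - y) by rewrite mulr_ge0 ?enorm_ge0 //; lra.
have supS := has_sup_cont_on_ball cE cA Ex L0.
set L := k * enorm (x - y) in lL L0 supS *; set M := sup _.
have M_ge t : 0 <= t <= l -> enorm (A (p t) - A x) <= M.
  move=> /andP[t0 tl]; apply: (sup_upper_bound supS); exists (p t) => //; split => //.
  rewrite -p0 enorm_distC; apply: le_trans (p_lip t 0 t0 (lexx 0)) _.
  by rewrite subr0 ger0_norm //; lra.
have M0 : 0 <= M := le_trans (enorm_ge0 _) (M_ge 0 (ltac:(by rewrite lexx l0))).
have [N [mN N0 notN]] :=
  f_deriv `[0, l] p (fun t _ => pE t) (loc_lipschitz_path_unit_speed p_lip).
have negN : (@lebesgue_measure R).-negligible N by exists N; split.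
have deriv_off_N t : 0 <= t <= l -> ~ N t ->
    [/\ derivable (f \o p) t 1, derivable p t 1 &
        derive1 (f \o p) t = dotv (A (p t)) (derive1 p t)].
  move=> /andP[t0 tl] Nt; apply: contrapT => not_deriv; apply: Nt; apply: notN.
  by move=> /(_ (ltac:(by rewrite /= in_itv /= t0 tl))).
have := unit_speed_mvi l0 f_lip pE p_lip negN deriv_off_N M_ge.
by rewrite p0 pl => /le_trans; apply; rewrite [L * M]mulrC ler_wpM2l.
Qed.
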